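(* Let $\mathcal{H}$ be a complex Hilbert space and $A,B,C,D\in\mathcal{B}(\mathcal{H})$. Then for every $0\le\alpha\le1$, $$\begin{aligned}w^4\left(\begin{bmatrix}A & B\\ C & D\end{bmatrix}\right)\le{}& 8\max\{w^4(A),w^4(D)\}+(1+\alpha)\max\left\{\big\||B|^4+|C^*|^4\big\|,\ \big\||B^*|^4+|C|^4\big\|\right\}\\&+2(1-\alpha)\max\{w^2(BC),w^2(CB)\}\\&+2\max\left\{\big\||B|^2+|C^*|^2\big\|,\ \big\||B^*|^2+|C|^2\big\|\right\}\cdot\max\{w(BC),w(CB)\}.\end{aligned}$$
   Context: $\mathcal{B}(\mathcal{H})$ is the algebra of bounded linear operators on $\mathcal{H}$ with operator norm $\|\cdot\|$. For $T\in\mathcal{B}(\mathcal{H})$, $T^*$ is the adjoint, $|T|=(T^*T)^{1/2}$, $|T^*|=(TT^* )^{1/2}$, and $w(T)=\sup_{\|x\|=1}|\langle Tx,x\rangle|$ is the numerical radius. The operator matrix $\begin{bmatrix}A&B\\C&D\end{bmatrix}$ acts on $\mathcal{H}\oplus\mathcal{H}$ by $(x_1,x_2)\mapsto(Ax_1+Bx_2,\,Cx_1+Dx_2)$. *)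

From HB Require Import structures.
From mathcomp Require Import all_boot all_order all_algebra.
From mathcomp Require Import boolp classical_sets reals.
From mathcomp.real_closed Require Import complex.
Set Implicit Arguments. Unset Strict Implicit. Unset Printing Implicit Defensive.
Import Order.TTheory GRing.Theory Num.Theory.
Local Open Scope ring_scope.

Definition is_inner_product (R : realType) (V : lmodType R[i])
  (ip : V -> V -> R[i]) : Prop :=
  [/\ (forall (a : R[i]) (x y z : V), ip (a *: x + y) z = a * ip x z + ip y z),
      (forall x y : V, ip y x = (ip x y)^*),
      (forall x : V, 0 <= ip x x) &
      (forall x : V, ip x x = 0 -> x = 0)].

Definition ipnorm (R : realType) (V : lmodType R[i]) (ip : V -> V -> R[i])
  (x : V) : R := Num.sqrt (complex.Re (ip x x)).

Definition ip_complete (R : realType) (V : lmodType R[i]) (ip : V -> V -> R[i])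
  : Prop :=
  forall u : nat -> V,
    (forall e : R, 0 < e -> exists N : nat, forall m n : nat,
        (N <= m)%N -> (N <= n)%N -> ipnorm ip (u m - u n) < e) ->
    exists l : V, forall e : R, 0 < e -> exists N : nat, forall n : nat,
        (N <= n)%N -> ipnorm ip (u n - l) < e.

Definition is_hilbert (R : realType) (V : lmodType R[i]) (ip : V -> V -> R[i])
  : Prop := is_inner_product ip /\ ip_complete ip.

Definition is_bounded_op (R : realType) (V : lmodType R[i])
  (ip : V -> V -> R[i]) (T : V -> V) : Prop :=
  linear T /\ exists M : R, forall x : V, ipnorm ip (T x) <= M * ipnorm ip x.

Definition is_adjoint (R : realType) (V : lmodType R[i])
  (ip : V -> V -> R[i]) (T Ts : V -> V) : Prop :=
  forall x y : V, ip (T x) y = ip x (Ts y).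

Definition opnorm (R : realType) (V : lmodType R[i]) (ip : V -> V -> R[i])
  (T : V -> V) : R :=
  reals.sup [set ipnorm ip (T x) | x in [set x | ipnorm ip x = 1]]%classic.

Definition numrad (R : realType) (V : lmodType R[i]) (ip : V -> V -> R[i])
  (T : V -> V) : R :=
  reals.sup [set Normc.normc (ip (T x) x) | x in [set x | ipnorm ip x = 1]]%classic.

Definition ip_sum (R : realType) (V : lmodType R[i]) (ip : V -> V -> R[i])
  (x y : V * V) : R[i] := ip x.1 y.1 + ip x.2 y.2.

Definition opmatrix (R : realType) (V : lmodType R[i]) (A B C D : V -> V)
  (x : V * V) : V * V := (A x.1 + B x.2, C x.1 + D x.2).

(** |T|^2 = T^* T, given the adjoint Ts of T. *)
Definition absq (R : realType) (V : lmodType R[i]) (T Ts : V -> V) : V -> V :=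
  fun x => Ts (T x).

Definition absq4 (R : realType) (V : lmodType R[i]) (T Ts : V -> V) : V -> V :=
  fun x => absq T Ts (absq T Ts x).

Definition opadd (R : realType) (V : lmodType R[i]) (S T : V -> V) : V -> V :=
  fun x => S x + T x.

From HB Require Import structures.
From mathcomp Require Import all_boot all_order all_algebra.
From mathcomp Require Import boolp classical_sets reals.
From mathcomp.real_closed Require Import complex.
From mathcomp Require Import ring lra.
Set Implicit Arguments. Unset Strict Implicit. Unset Printing Implicit Defensive.
Import Order.TTheory GRing.Theory Num.Theory.
Local Open Scope complex_scope.
Local Open Scope ring_scope.

(* Write s = max(w(A), w(D)), W = max(w(BC), w(CB)),
   N2 = max(|| |B|^2 + |C^*|^2 ||, || |B^*|^2 + |C|^2 ||) and N4 the same
   maximum with fourth powers.  For a unit vector x = (x1, x2),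
     <Tx, x> = (<A x1, x1> + <D x2, x2>) + (<B x2, x1> + <C x1, x2>).
   The diagonal part has modulus at most s (a convex combination of w(A) and
   w(D)).  For the off-diagonal part, Buzano's inequality in H (+) H applied to
   a = (B x2, C x1), b = (C^* x2, B^* x1) and a phase-aligned unit vector g gives
   4 (|<B x2, x1>| + |<C x1, x2>|)^2 <= N2 + 2W.  Hence w(T) <= s + rho with
   4 rho^2 = N2 + 2W, and the theorem follows from the scalar facts
   (s + rho)^4 <= 8 s^4 + 8 rho^4, 2W <= N2 and N2^2 <= 2 N4. *)

Lemma le_of_sqr_le (R : realDomainType) (a b : R) :
  0 <= a -> 0 <= b -> a ^+ 2 <= b ^+ 2 -> a <= b.
Proof. by move=> a0 b0; rewrite ler_sqr ?nnegE. Qed.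

Lemma pow4_addr_le (R : realFieldType) (s r : R) :
  (s + r) ^+ 4 <= 8 * s ^+ 4 + 8 * r ^+ 4.
Proof.
have e : 8 * s ^+ 4 + 8 * r ^+ 4 - (s + r) ^+ 4
       = (s - r) ^+ 2 * (7 * s ^+ 2 + 10 * s * r + 7 * r ^+ 2) by ring.
have q0 : 0 <= 7 * s ^+ 2 + 10 * s * r + 7 * r ^+ 2.
  by have := sqr_ge0 (s + r); have := sqr_ge0 s; have := sqr_ge0 r; nra.
by rewrite -subr_ge0 e mulr_ge0 ?sqr_ge0.
Qed.

(* The scalar core of the theorem: from w(T) <= s + rho with
   4 rho^2 = N2 + 2W, 2W <= N2 and N2^2 <= 2 N4, interpolate with weight alpha
   between the two bounds 2W^2 <= N4 and W^2 <= W2 for the term 2W^2. *)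
Lemma quartic_estimate (R : realFieldType) (t s rho N2 W N4 S4 W2 alpha : R) :
  0 <= t -> t <= s + rho -> 0 <= s -> 0 <= rho -> 4 * rho ^+ 2 = N2 + 2 * W ->
  2 * W <= N2 -> 0 <= W -> N2 ^+ 2 <= 2 * N4 -> s ^+ 4 <= S4 -> W ^+ 2 <= W2 ->
  0 <= alpha <= 1 ->
  t ^+ 4 <= 8 * S4 + (1 + alpha) * N4 + 2 * (1 - alpha) * W2 + 2 * N2 * W.
Proof.
move=> t0 ts s0 r0 er WN W0 NN sS WW /andP[a0 a1].
have t4 : t ^+ 4 <= (s + rho) ^+ 4 by rewrite lerXn2r ?nnegrE ?addr_ge0.
have r4 : 8 * rho ^+ 4 = N2 ^+ 2 / 2 + 2 * N2 * W + 2 * W ^+ 2.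
  have -> : rho ^+ 4 = (rho ^+ 2) ^+ 2 by rewrite -exprM.
  have -> : rho ^+ 2 = (N2 + 2 * W) / 4 by rewrite -er; field.
  by field.
have W2N : 2 * W ^+ 2 <= N4.
  have : (2 * W) ^+ 2 <= N2 ^+ 2 by apply: lerXn2r; rewrite ?nnegrE; lra.
  by rewrite exprMn; lra.
have aN4 : alpha * (2 * W ^+ 2) <= alpha * N4 by rewrite ler_wpM2l.
have aW2 : (1 - alpha) * W ^+ 2 <= (1 - alpha) * W2 by rewrite ler_wpM2l ?subr_ge0.
have := pow4_addr_le s rho; rewrite r4; lra.
Qed.

Lemma convex_le_max (R : realDomainType) (a b p q : R) :
  0 <= p -> 0 <= q -> p + q = 1 -> a * p + b * q <= Num.max a b.
Proof.
move=> p0 q0 pq; rewrite -[leRHS]mulr1 -pq mulrDr.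
by apply: lerD; apply: ler_wpM2r => //; rewrite le_max lexx ?orbT.
Qed.

Lemma max_exprn_le (R : realDomainType) (a b : R) n :
  Num.max a b ^+ n <= Num.max (a ^+ n) (b ^+ n).
Proof. by case: (leP a b) => _; rewrite le_max lexx ?orbT. Qed.

(* Suprema of sets of nonnegative reals bounded by M (the conventions of
   [reals.sup] make the unbounded or empty cases harmless). *)
Lemma sup_ge0_of (R : realType) (E : set R) :
  (forall y, E y -> 0 <= y) -> 0 <= sup E.
Proof.
move=> h; have [[[y Ey] ubE]|hs] := pselect (has_sup E); last by rewrite sup_out.
apply: le_trans (h y Ey) _.
exact: (sup_upper_bound (conj (ex_intro _ y Ey) ubE)).
Qed.

Lemma sup_le_of (R : realType) (E : set R) (M : R) :
  0 <= M -> (forall y, E y -> y <= M) -> sup E <= M.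
Proof.
move=> M0 h; have [[ne _]|hs] := pselect (has_sup E); last by rewrite sup_out.
exact: ge_sup.
Qed.

Lemma le_sup_of (R : realType) (E : set R) (M y : R) :
  (forall z, E z -> z <= M) -> E y -> y <= sup E.
Proof. by move=> h Ey; apply: ub_le_sup => //; exists M. Qed.

Lemma normr_normc (R : rcfType) (z : R[i]) : `|z| = (Normc.normc z)%:C.
Proof. by []. Qed.

Lemma normc_ge0 (R : rcfType) (z : R[i]) : 0 <= Normc.normc z.
Proof. by case: z => a b; exact: sqrtr_ge0. Qed.

Lemma normc_real (R : rcfType) (r : R) : 0 <= r -> Normc.normc r%:C = r.
Proof. by move=> r0; rewrite /Normc.normc /= expr0n /= addr0 sqrtr_sqr ger0_norm. Qed.

Lemma normc_conj (R : rcfType) (z : R[i]) : Normc.normc z^* = Normc.normc z.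
Proof. by case: z => a b; rewrite /Normc.normc /= sqrrN. Qed.

Lemma phase_align (R : rcfType) (z : R[i]) :
  exists2 w : R[i], Normc.normc w = 1 & w * z = (Normc.normc z)%:C.
Proof.
have [->|nz] := eqVneq z 0.
  by exists 1; rewrite ?Normc.normc1 // mulr0 Normc.normc0.
have nzn : Normc.normc z != 0 by apply: contra_neq nz; exact: Normc.eq0_normc.
exists ((Normc.normc z)%:C / z); last by rewrite divfK.
by rewrite Normc.normcM Normc.normcV normc_real ?normc_ge0 ?divff.
Qed.

Section InnerProduct.
Variables (R : realType) (V : lmodType R[i]) (ip : V -> V -> R[i]).
Hypothesis ipP : is_inner_product ip.

Local Notation nrm := (ipnorm ip).

Lemma ipDl x y z : ip (x + y) z = ip x z + ip y z.
Proof. by case: ipP => h _ _ _; have := h 1 x y z; rewrite scale1r mul1r. Qed.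

Lemma ip0l z : ip 0 z = 0.
Proof.
have h := ipDl 0 0 z; rewrite addr0 in h.
by apply: (addrI (ip 0 z)); rewrite addr0 -h.
Qed.

Lemma ipZl a x z : ip (a *: x) z = a * ip x z.
Proof. by case: ipP => h _ _ _; have := h a x 0 z; rewrite addr0 ip0l addr0. Qed.

Lemma ipC x y : ip y x = (ip x y)^*.
Proof. by case: ipP. Qed.

Lemma ipBl x y z : ip (x - y) z = ip x z - ip y z.
Proof. by rewrite ipDl -scaleN1r ipZl mulN1r. Qed.

Lemma ipDr x y z : ip z (x + y) = ip z x + ip z y.
Proof. by rewrite (ipC (x + y)) (ipC x) (ipC y) ipDl rmorphD. Qed.

Lemma ipZr a x z : ip z (a *: x) = a^* * ip z x.
Proof. by rewrite (ipC (a *: x)) (ipC x) ipZl rmorphM. Qed.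

Lemma ipBr x y z : ip z (x - y) = ip z x - ip z y.
Proof. by rewrite (ipC (x - y)) (ipC x) (ipC y) ipBl rmorphB. Qed.

Lemma ip0r z : ip z 0 = 0.
Proof. by rewrite ipC ip0l conjC0. Qed.

Lemma ip_ge0 x : 0 <= ip x x.
Proof. by case: ipP => _ _ h _; apply: h. Qed.

Lemma ip_eq0 x : ip x x = 0 -> x = 0.
Proof. by case: ipP => _ _ _ h; apply: h. Qed.

Lemma ipnorm_ge0 x : 0 <= nrm x.
Proof. exact: sqrtr_ge0. Qed.

Lemma ip_normE x : ip x x = (nrm x ^+ 2)%:C.
Proof.
have h := ip_ge0 x; have hr : 0 <= complex.Re (ip x x).
  by move: h; rewrite lecE /= => /andP[_].
rewrite /ipnorm sqr_sqrtr //.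
by move: (ger0_Im h); case: (ip x x) => a b /= ->.
Qed.

Lemma ipnorm0 : nrm 0 = 0.
Proof. by rewrite /ipnorm ip0l /= sqrtr0. Qed.

Lemma ipnorm_eq0 x : nrm x = 0 -> x = 0.
Proof. by move=> h; apply: ip_eq0; rewrite ip_normE h expr0n. Qed.

Lemma ipnorm_eq x r : 0 <= r -> ip x x = (r ^+ 2)%:C -> nrm x = r.
Proof. by move=> r0 e; rewrite /ipnorm e /= sqrtr_sqr ger0_norm. Qed.

Lemma ipnormZ c x : nrm (c *: x) = Normc.normc c * nrm x.
Proof.
apply: ipnorm_eq; first by rewrite mulr_ge0 ?normc_ge0 ?ipnorm_ge0.
rewrite ipZl ipZr ip_normE mulrA -normCK.
by rewrite -rmorphXn -rmorphM exprMn.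
Qed.

(* Cauchy-Schwarz, first in squared form, by expanding <x - t y, x - t y>
   with t = <x, y> / <y, y>. *)
Lemma cauchy_schwarz_sqr x y : `|ip x y| ^+ 2 <= ip x x * ip y y.
Proof.
have [->|y0] := eqVneq y 0; first by rewrite ip0r normr0 expr0n /= ip0l mulr0.
set g := ip y y; set p := ip x y.
have gp : 0 < g by rewrite lt_def ip_ge0 andbT; apply: contra_neq y0 => /ip_eq0.
have gJ : g^* = g by rewrite geC0_conj ?ltW.
have tJ : (p / g)^* = p^* / g by rewrite rmorphM fmorphV /= gJ.
have := ip_ge0 (x - (p / g) *: y).
rewrite ipBl !ipBr !ipZl !ipZr -/g -/p (ipC x y) -/p tJ.
have -> : ip x x - p^* / g * p - (p / g * p^* - p / g * (p^* / g * g))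
        = ip x x - p * p^* / g by field; rewrite gt_eqF.
by rewrite subr_ge0 normCK ler_pdivrMr.
Qed.

Lemma cauchy_schwarz x y : Normc.normc (ip x y) <= nrm x * nrm y.
Proof.
have := cauchy_schwarz_sqr x y; rewrite !ip_normE -!rmorphXn -rmorphM lecR.
by rewrite -exprMn => h; apply: le_of_sqr_le; rewrite ?mulr_ge0 ?ipnorm_ge0 ?normc_ge0.
Qed.

(* The triangle inequality, from Re <x, y> <= |<x, y>| <= ||x|| ||y||. *)
Lemma ipnormD x y : nrm (x + y) <= nrm x + nrm y.
Proof.
have re_le : ip x y + (ip x y)^* <= 2 * `|ip x y|.
  have -> : ip x y + (ip x y)^* = 2 * 'Re (ip x y) by rewrite ReE; field.
  by rewrite ler_pM2l ?(leif_Re_Creal _).1.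
have e : ip (x + y) (x + y) = ip x x + ip y y + (ip x y + (ip x y)^*).
  by rewrite ipDl !ipDr -(ipC x y); ring.
have := lerD (lexx (ip x x + ip y y)) re_le; rewrite -e !ip_normE.
have -> : (nrm x ^+ 2)%:C + (nrm y ^+ 2)%:C + 2 * `|ip x y|
        = (nrm x ^+ 2 + nrm y ^+ 2 + 2 * Normc.normc (ip x y))%:C by simpc.
rewrite lecR => h; apply: le_of_sqr_le; rewrite ?addr_ge0 ?ipnorm_ge0 //.
have := cauchy_schwarz x y; rewrite sqrrD; nra.
Qed.

(* Reflecting a in the line of g
   (v = 2<a,g> g - a, a vector of the same norm) gives
   2 <a, g><g, b> = <v, b> + <a, b>. *)
Lemma buzano a b g : ip g g = 1 ->
  2 * Normc.normc (ip a g * ip g b) <= nrm a * nrm b + Normc.normc (ip a b).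
Proof.
move=> g1; set k := ip a g; set v := (2 * k) *: g - a.
have nv : nrm v = nrm a.
  apply: ipnorm_eq; rewrite ?ipnorm_ge0 // -ip_normE.
  rewrite /v !ipBl !ipBr !ipZl !ipZr g1 (ipC a g) -/k rmorphM rmorph_nat; ring.
have e : 2 * (k * ip g b) = ip v b + ip a b by rewrite /v ipBl ipZl; ring.
have n2 : Normc.normc (2 : R[i]) = 2 by rewrite normcMn Normc.normc1.
rewrite -n2 -Normc.normcM e; apply: le_trans (le_normcD _ _) _.
by rewrite lerD2r -nv cauchy_schwarz.
Qed.

End InnerProduct.

Section Operators.
Variables (R : realType) (V : lmodType R[i]) (ip : V -> V -> R[i]).
Hypothesis ipP : is_inner_product ip.

Local Notation nrm := (ipnorm ip).

(* Homogeneity, the part of linearity the estimates below need. *)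
Definition op_homogeneous (T : V -> V) : Prop := forall c x, T (c *: x) = c *: T x.

Definition op_bounded (T : V -> V) : Prop :=
  exists2 M, 0 <= M & forall x, nrm (T x) <= M * nrm x.

Lemma is_bounded_op_bounded T : is_bounded_op ip T -> op_bounded T.
Proof.
case=> _ [M hM]; exists `|M|; first exact: normr_ge0.
by move=> x; apply: le_trans (hM x) _; rewrite ler_wpM2r ?ipnorm_ge0 ?ler_norm.
Qed.

Lemma is_bounded_op_homogeneous T : is_bounded_op ip T -> op_homogeneous T.
Proof.
case=> lin _ c x; have T0 : T 0 = 0.
  have := lin 1 0 0; rewrite scaler0 addr0 scale1r => h.
  by apply: (addrI (T 0)); rewrite addr0 -h.
by have := lin c x 0; rewrite !addr0 T0 addr0.
Qed.

Lemma homogeneous0 T : op_homogeneous T -> T 0 = 0.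
Proof. by move=> h; have := h 0 0; rewrite !scale0r. Qed.

Lemma adjointC T Ts : is_adjoint ip T Ts -> is_adjoint ip Ts T.
Proof. by move=> h x y; rewrite (ipC ipP) -h -(ipC ipP). Qed.

(* An adjoint is automatically homogeneous, and bounded by the same constant
   since ||T^* y||^2 = <T T^* y, y> <= M ||T^* y|| ||y||. *)
Lemma adjoint_homogeneous T Ts : is_adjoint ip T Ts -> op_homogeneous Ts.
Proof.
move=> h c y; set d := Ts (c *: y) - c *: Ts y.
apply/eqP; rewrite -subr_eq0; apply/eqP; apply: (ip_eq0 ipP).
by rewrite -/d {2}/d (ipBr ipP) (ipZr ipP) -!h (ipZr ipP) subrr.
Qed.

Lemma adjoint_bounded T Ts : is_adjoint ip T Ts -> op_bounded T -> op_bounded Ts.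
Proof.
move=> h [M M0 hM]; exists M => // y.
have e : nrm (Ts y) ^+ 2 = Normc.normc (ip (T (Ts y)) y).
  by rewrite h (ip_normE ipP) normc_real ?sqr_ge0.
have := cauchy_schwarz ipP (T (Ts y)) y; rewrite -e => cs.
have : nrm (Ts y) * nrm (Ts y) <= (M * nrm y) * nrm (Ts y).
  by rewrite -expr2; apply: le_trans cs _; rewrite mulrAC ler_wpM2r ?ipnorm_ge0.
have [->|nz] := eqVneq (nrm (Ts y)) 0; first by rewrite mulr_ge0 ?ipnorm_ge0.
by rewrite ler_pM2r // lt_def nz ipnorm_ge0.
Qed.

Lemma bounded_comp S T : op_bounded S -> op_bounded T -> op_bounded (S \o T).
Proof.
move=> [M M0 hM] [N N0 hN]; exists (M * N) => [|x /=]; first exact: mulr_ge0.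
by apply: le_trans (hM _) _; rewrite -mulrA ler_wpM2l.
Qed.

Lemma bounded_add S T : op_bounded S -> op_bounded T -> op_bounded (opadd S T).
Proof.
move=> [M M0 hM] [N N0 hN]; exists (M + N) => [|x]; first exact: addr_ge0.
by apply: le_trans (ipnormD ipP _ _) _; rewrite mulrDl lerD.
Qed.

Lemma homogeneous_comp (S T : V -> V) :
  op_homogeneous S -> op_homogeneous T -> op_homogeneous (S \o T).
Proof. by move=> hS hT c x /=; rewrite hT hS. Qed.

Lemma homogeneous_add (S T : V -> V) :
  op_homogeneous S -> op_homogeneous T -> op_homogeneous (opadd S T).
Proof. by move=> hS hT c x; rewrite /opadd hS hT scalerDr. Qed.

Lemma opnorm_ge0 T : 0 <= opnorm ip T.
Proof. by apply: sup_ge0_of => y [x _ <-]; exact: ipnorm_ge0. Qed.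

Lemma numrad_ge0 T : 0 <= numrad ip T.
Proof. by apply: sup_ge0_of => y [x _ <-]; exact: normc_ge0. Qed.

Lemma opnorm_ub T M : 0 <= M -> (forall x, nrm x = 1 -> nrm (T x) <= M) ->
  opnorm ip T <= M.
Proof. by move=> M0 h; apply: sup_le_of => // y [x hx <-]; exact: h. Qed.

Lemma numrad_ub T M : 0 <= M ->
  (forall x, nrm x = 1 -> Normc.normc (ip (T x) x) <= M) -> numrad ip T <= M.
Proof. by move=> M0 h; apply: sup_le_of => // y [x hx <-]; exact: h. Qed.

Lemma ipnorm_normalize x : nrm x != 0 -> nrm ((nrm x)^-1%:C *: x) = 1.
Proof.
by move=> nz; rewrite (ipnormZ ipP) normc_real ?invr_ge0 ?ipnorm_ge0 ?mulVf.
Qed.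

Lemma le_opnorm T : op_homogeneous T -> op_bounded T ->
  forall x, nrm (T x) <= opnorm ip T * nrm x.
Proof.
move=> hT [M M0 hM] x; have [e|nz] := eqVneq (nrm x) 0.
  by rewrite (ipnorm_eq0 ipP e) homogeneous0 // (ipnorm0 ipP) mulr0.
have xp : 0 < nrm x by rewrite lt_def nz ipnorm_ge0.
have : nrm (T ((nrm x)^-1%:C *: x)) <= opnorm ip T.
  apply: (@le_sup_of _ _ M).
    by move=> z [y hy <-]; apply: le_trans (hM y) _; rewrite hy mulr1.
  by exists ((nrm x)^-1%:C *: x) => //; exact: ipnorm_normalize.
rewrite hT (ipnormZ ipP) normc_real ?invr_ge0 ?ipnorm_ge0 // => h.
by rewrite -ler_pdivrMr // mulrC.
Qed.

Lemma le_numrad T : op_homogeneous T -> op_bounded T ->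
  forall x, Normc.normc (ip (T x) x) <= numrad ip T * nrm x ^+ 2.
Proof.
move=> hT [M M0 hM] x; have [e|nz] := eqVneq (nrm x) 0.
  rewrite (ipnorm_eq0 ipP e) homogeneous0 // (ip0l ipP) (ipnorm0 ipP).
  by rewrite expr0n mulr0 Normc.normc0.
have xp : 0 < nrm x by rewrite lt_def nz ipnorm_ge0.
set c := (nrm x)^-1%:C.
have : Normc.normc (ip (T (c *: x)) (c *: x)) <= numrad ip T.
  apply: (@le_sup_of _ _ M); last by exists (c *: x) => //; exact: ipnorm_normalize.
  move=> z [y hy <-]; apply: le_trans (cauchy_schwarz ipP _ _) _.
  by rewrite hy mulr1; apply: le_trans (hM y) _; rewrite hy mulr1.
rewrite hT (ipZl ipP) (ipZr ipP) !Normc.normcM normc_conj.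
rewrite normc_real ?invr_ge0 ?ipnorm_ge0 // mulrA -expr2 exprVn => h.
by rewrite -ler_pdivrMr ?exprn_gt0 // mulrC.
Qed.

Lemma absq_form T Ts x : is_adjoint ip T Ts ->
  ip (absq T Ts x) x = (nrm (T x) ^+ 2)%:C.
Proof.
move=> h; rewrite /absq (ipC ipP) -h (ip_normE ipP).
by rewrite geC0_conj // ler0c sqr_ge0.
Qed.

Lemma absq4_form T Ts x : is_adjoint ip T Ts ->
  ip (absq4 T Ts x) x = (nrm (absq T Ts x) ^+ 2)%:C.
Proof.
move=> h; rewrite /absq4 {1}/absq (adjointC h) (ipC ipP) -(adjointC h).
rewrite (ip_normE ipP).
by rewrite geC0_conj // ler0c sqr_ge0.
Qed.

Lemma form_le_opnorm P y r : op_homogeneous P -> op_bounded P -> 0 <= r ->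
  ip (P y) y = r%:C -> r <= opnorm ip P * nrm y ^+ 2.
Proof.
move=> hP bP r0 e; rewrite -(normc_real r0) -e.
apply: le_trans (cauchy_schwarz ipP _ _) _.
by rewrite expr2 mulrA ler_wpM2r ?ipnorm_ge0 ?le_opnorm.
Qed.

End Operators.

Section DirectSum.
Variables (R : realType) (V : lmodType R[i]) (ip : V -> V -> R[i]).
Hypothesis ipP : is_inner_product ip.

Lemma ip_sum_inner_product : is_inner_product (ip_sum ip).
Proof.
split.
- move=> a [x1 x2] [y1 y2] [z1 z2].
  by rewrite /ip_sum /= !(ipDl ipP) !(ipZl ipP); ring.
- by move=> [x1 x2] [y1 y2]; rewrite /ip_sum /= (ipC ipP x1) (ipC ipP x2) rmorphD.
- by move=> [x1 x2]; rewrite /ip_sum /= addr_ge0 ?(ip_ge0 ipP).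
- move=> [x1 x2] /eqP; rewrite /ip_sum /= paddr_eq0 ?(ip_ge0 ipP) //.
  by case/andP=> /eqP/(ip_eq0 ipP) -> /eqP/(ip_eq0 ipP) ->.
Qed.

Lemma ipnorm_sum x1 x2 :
  ipnorm (ip_sum ip) (x1, x2) ^+ 2 = ipnorm ip x1 ^+ 2 + ipnorm ip x2 ^+ 2.
Proof.
apply: complexI; rewrite -(ip_normE ip_sum_inner_product) /ip_sum /=.
by rewrite !(ip_normE ipP) rmorphD.
Qed.

End DirectSum.

(* Estimates for the positive operator |S|^2 + |T^*|^2 = S^*S + TT^* and its
   analogue |S|^4 + |T^*|^4, where Ss and Ts are the adjoints of S and T;
   the theorem uses (S, T) = (B, C) and (S, T) = (Bs, Cs). *)
Section GramPair.
Variables (R : realType) (V : lmodType R[i]) (ip : V -> V -> R[i]).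
Variables (S Ss T Ts : V -> V).
Hypothesis ipP : is_inner_product ip.
Hypotheses (adjS : is_adjoint ip S Ss) (adjT : is_adjoint ip T Ts).
Hypotheses (bS : op_bounded ip S) (bT : op_bounded ip T).

Local Notation nrm := (ipnorm ip).
Local Notation P2 := (opadd (absq S Ss) (absq Ts T)).
Local Notation P4 := (opadd (absq4 S Ss) (absq4 Ts T)).

Let adjSs : is_adjoint ip Ss S := adjointC ipP adjS.
Let adjTs : is_adjoint ip Ts T := adjointC ipP adjT.
Let hS : op_homogeneous S := adjoint_homogeneous ipP adjSs.
Let hSs : op_homogeneous Ss := adjoint_homogeneous ipP adjS.
Let hT : op_homogeneous T := adjoint_homogeneous ipP adjTs.
Let hTs : op_homogeneous Ts := adjoint_homogeneous ipP adjT.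
Let bSs : op_bounded ip Ss := adjoint_bounded ipP adjS bS.
Let bTs : op_bounded ip Ts := adjoint_bounded ipP adjT bT.
Let hSsS : op_homogeneous (absq S Ss) := homogeneous_comp hSs hS.
Let hTTs : op_homogeneous (absq Ts T) := homogeneous_comp hT hTs.
Let bSsS : op_bounded ip (absq S Ss) := bounded_comp bSs bS.
Let bTTs : op_bounded ip (absq Ts T) := bounded_comp bT bTs.

Lemma gram2_form y :
  nrm (S y) ^+ 2 + nrm (Ts y) ^+ 2 <= opnorm ip P2 * nrm y ^+ 2.
Proof.
apply: (form_le_opnorm ipP (homogeneous_add hSsS hTTs) (bounded_add ipP bSsS bTTs)).
  by rewrite addr_ge0 ?sqr_ge0.
by rewrite /opadd (ipDl ipP) (absq_form ipP _ adjS) (absq_form ipP _ adjTs) rmorphD.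
Qed.

Lemma gram2_cross y :
  2 * Normc.normc (ip (S y) (Ts y)) <= opnorm ip P2 * nrm y ^+ 2.
Proof.
apply: le_trans (gram2_form y).
have := (leif_mean_square (nrm (S y)) (nrm (Ts y))).1.
have := cauchy_schwarz ipP (S y) (Ts y); lra.
Qed.

Lemma numrad_comp_le : 2 * numrad ip (T \o S) <= opnorm ip P2.
Proof.
suff : numrad ip (T \o S) <= opnorm ip P2 / 2 by lra.
apply: numrad_ub => [|y y1 /=]; first by rewrite divr_ge0 ?opnorm_ge0.
by rewrite adjT; have := gram2_cross y; rewrite y1 expr1n mulr1; lra.
Qed.

Lemma numrad_adj_comp_le : 2 * numrad ip (Ss \o Ts) <= opnorm ip P2.
Proof.
suff : numrad ip (Ss \o Ts) <= opnorm ip P2 / 2 by lra.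
apply: numrad_ub => [|y y1 /=]; first by rewrite divr_ge0 ?opnorm_ge0.
rewrite (ipC ipP) -adjS normc_conj.
by have := gram2_cross y; rewrite y1 expr1n mulr1; lra.
Qed.

(* || |S|^2 + |T^*|^2 ||^2 <= 2 || |S|^4 + |T^*|^4 ||, because
   || (|S|^2 + |T^*|^2) x ||^2 <= 2 (|| |S|^2 x ||^2 + || |T^*|^2 x ||^2)
   and the right-hand side is the quadratic form of |S|^4 + |T^*|^4. *)
Lemma gram4_form y :
  nrm (absq S Ss y) ^+ 2 + nrm (absq Ts T y) ^+ 2 <= opnorm ip P4 * nrm y ^+ 2.
Proof.
have hP4 := homogeneous_add (homogeneous_comp hSsS hSsS) (homogeneous_comp hTTs hTTs).
have bP4 := bounded_add ipP (bounded_comp bSsS bSsS) (bounded_comp bTTs bTTs).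
apply: (form_le_opnorm ipP hP4 bP4); first by rewrite addr_ge0 ?sqr_ge0.
by rewrite /opadd (ipDl ipP) (absq4_form ipP _ adjS) (absq4_form ipP _ adjTs) rmorphD.
Qed.

Lemma gram2_sqr_le : opnorm ip P2 ^+ 2 <= 2 * opnorm ip P4.
Proof.
have N0 := opnorm_ge0 ip P4.
suff : opnorm ip P2 <= Num.sqrt (2 * opnorm ip P4).
  by rewrite -ler_sqr ?nnegrE ?sqrtr_ge0 ?opnorm_ge0 // sqr_sqrtr ?mulr_ge0.
apply: opnorm_ub => [|x x1]; first exact: sqrtr_ge0.
apply: le_of_sqr_le; rewrite ?ipnorm_ge0 ?sqrtr_ge0 //.
rewrite [X in _ <= X]sqr_sqrtr ?mulr_ge0 //.
have := gram4_form x; rewrite x1 expr1n mulr1 /opadd.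
set u := absq S Ss x; set v := absq Ts T x.
have uv : nrm (u + v) <= nrm u + nrm v := ipnormD ipP u v.
have uv2 : nrm (u + v) ^+ 2 <= (nrm u + nrm v) ^+ 2.
  by rewrite lerXn2r ?nnegrE ?addr_ge0 ?ipnorm_ge0.
have := sqr_ge0 (nrm u - nrm v); rewrite sqrrB sqrrD in uv2 *; lra.
Qed.

End GramPair.

Section OperatorMatrix.
Variables (R : realType) (H : lmodType R[i]) (ip : H -> H -> R[i]).
Variables (A B C D Bs Cs : H -> H).
Hypothesis ipP : is_inner_product ip.
Hypotheses (bA : is_bounded_op ip A) (bB : is_bounded_op ip B).
Hypotheses (bC : is_bounded_op ip C) (bD : is_bounded_op ip D).
Hypotheses (adjB : is_adjoint ip B Bs) (adjC : is_adjoint ip C Cs).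

Local Notation nrm := (ipnorm ip).

Definition diag_rad : R := Num.max (numrad ip A) (numrad ip D).
Definition gram_norm : R :=
  Num.max (opnorm ip (opadd (absq B Bs) (absq Cs C)))
          (opnorm ip (opadd (absq Bs B) (absq C Cs))).
Definition cross_rad : R := Num.max (numrad ip (B \o C)) (numrad ip (C \o B)).

Let bB' : op_bounded ip B := is_bounded_op_bounded bB.
Let bC' : op_bounded ip C := is_bounded_op_bounded bC.
Let bBs : op_bounded ip Bs := adjoint_bounded ipP adjB bB'.
Let bCs : op_bounded ip Cs := adjoint_bounded ipP adjC bC'.
Let adjBs : is_adjoint ip Bs B := adjointC ipP adjB.
Let adjCs : is_adjoint ip Cs C := adjointC ipP adjC.

(* 2W <= N2: apply the Gram-pair bounds to (B, C) and to (Bs, Cs). *)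
Lemma cross_rad_le : 2 * cross_rad <= gram_norm.
Proof.
rewrite /cross_rad /gram_norm maxr_pMr // maxC.
exact: le_max2 (numrad_comp_le ipP adjB adjC bB' bC')
               (numrad_adj_comp_le ipP adjBs adjCs bBs bCs).
Qed.

Lemma gram_norm_sqr_le :
  gram_norm ^+ 2 <= 2 * Num.max (opnorm ip (opadd (absq4 B Bs) (absq4 Cs C)))
                                (opnorm ip (opadd (absq4 Bs B) (absq4 C Cs))).
Proof.
apply: le_trans (max_exprn_le _ _ 2) _; rewrite maxr_pMr //.
exact: le_max2 (gram2_sqr_le ipP adjB adjC bB' bC')
               (gram2_sqr_le ipP adjBs adjCs bBs bCs).
Qed.

Lemma offdiag_norms x1 x2 : nrm x1 ^+ 2 + nrm x2 ^+ 2 = 1 ->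
  nrm (B x2) ^+ 2 + nrm (C x1) ^+ 2 + (nrm (Cs x2) ^+ 2 + nrm (Bs x1) ^+ 2)
    <= gram_norm.
Proof.
move=> hn; rewrite /gram_norm.
apply: (le_trans _ (convex_le_max _ _ (sqr_ge0 (nrm x2)) (sqr_ge0 (nrm x1)) _));
  last by rewrite addrC.
have := gram2_form ipP adjB adjC bB' bC' x2.
have := gram2_form ipP adjBs adjCs bBs bCs x1; lra.
Qed.

Lemma offdiag_inner x1 x2 : nrm x1 ^+ 2 + nrm x2 ^+ 2 = 1 ->
  Normc.normc (ip (B x2) (Cs x2) + ip (C x1) (Bs x1)) <= cross_rad.
Proof.
move=> hn; rewrite /cross_rad; apply: le_trans (le_normcD _ _) _.
apply: (le_trans _ (convex_le_max _ _ (sqr_ge0 (nrm x1)) (sqr_ge0 (nrm x2)) hn)).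
rewrite addrC -adjC -adjB; apply: lerD; apply: le_numrad => //.
- exact: homogeneous_comp (adjoint_homogeneous ipP adjBs)
                          (adjoint_homogeneous ipP adjCs).
- exact: bounded_comp.
- exact: homogeneous_comp (adjoint_homogeneous ipP adjCs)
                          (adjoint_homogeneous ipP adjBs).
- exact: bounded_comp.
Qed.

(* The off-diagonal part of <Tx, x>: with r = |<B x2, x1>| + |<C x1, x2>|,
   Buzano's inequality for a, b and the unit vector g = (w1^* x1, w2^* x2),
   whose phases w1, w2 make <a, g> = r and |<g, b>| = r, gives
   2 r^2 <= ||a|| ||b|| + |<a, b>| <= N2 / 2 + W. *)
Lemma offdiag_le x1 x2 : nrm x1 ^+ 2 + nrm x2 ^+ 2 = 1 ->
  4 * (Normc.normc (ip (B x2) x1) + Normc.normc (ip (C x1) x2)) ^+ 2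
    <= gram_norm + 2 * cross_rad.
Proof.
move=> hn; set p := ip (B x2) x1; set q := ip (C x1) x2.
set r := Normc.normc p + Normc.normc q.
have [w1 w1n ew1] := phase_align p; have [w2 w2n ew2] := phase_align q.
have ww1 : w1^* * w1 = 1 by rewrite mulrC -normCK normr_normc w1n expr1n.
have ww2 : w2^* * w2 = 1 by rewrite mulrC -normCK normr_normc w2n expr1n.
pose g := (w1^* *: x1, w2^* *: x2); pose a := (B x2, C x1); pose b := (Cs x2, Bs x1).
have g1 : ip_sum ip g g = 1.
  rewrite /ip_sum /= !(ipZl ipP) !(ipZr ipP) !conjCK !mulrA ww1 ww2 !mul1r.
  by rewrite !(ip_normE ipP) -rmorphD hn.
have rC : r%:C = w1 * p + w2 * q by rewrite ew1 ew2 -rmorphD.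
have ag : ip_sum ip a g = r%:C.
  by rewrite /ip_sum /= !(ipZr ipP) !conjCK -/p -/q rC.
have gb : ip_sum ip g b = w1^* * w2^* * r%:C.
  rewrite /ip_sum /= !(ipZl ipP) -adjC -adjB -/p -/q rC.
  have -> : w1^* * q + w2^* * p = w1^* * (w2^* * w2) * q + w2^* * (w1^* * w1) * p.
    by rewrite ww1 ww2 !mulr1.
  ring.
have r0 : 0 <= r by rewrite addr_ge0 ?normc_ge0.
have agb : Normc.normc (ip_sum ip a g * ip_sum ip g b) = r * r.
  by rewrite ag gb !Normc.normcM !normc_conj w1n w2n normc_real // !mul1r.
have := buzano (ip_sum_inner_product ipP) a b g1; rewrite agb.
have := (leif_mean_square (ipnorm (ip_sum ip) a) (ipnorm (ip_sum ip) b)).1.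
have := offdiag_norms hn; rewrite -!(ipnorm_sum ipP).
have : Normc.normc (ip_sum ip a b) <= cross_rad := offdiag_inner hn.
rewrite expr2; lra.
Qed.

Lemma numrad_opmatrix_le : numrad (ip_sum ip) (opmatrix A B C D)
  <= diag_rad + Num.sqrt ((gram_norm + 2 * cross_rad) / 4).
Proof.
apply: numrad_ub => [|[x1 x2] hx].
  by rewrite addr_ge0 ?sqrtr_ge0 // le_max numrad_ge0.
have hn : nrm x1 ^+ 2 + nrm x2 ^+ 2 = 1 by rewrite -(ipnorm_sum ipP) hx expr1n.
have -> : ip_sum ip (opmatrix A B C D (x1, x2)) (x1, x2)
        = (ip (A x1) x1 + ip (D x2) x2) + (ip (B x2) x1 + ip (C x1) x2).
  by rewrite /ip_sum /opmatrix /= !(ipDl ipP); ring.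
apply: le_trans (le_normcD _ _) _; apply: lerD.
  apply: le_trans (le_normcD _ _) _.
  rewrite /diag_rad.
  apply: (le_trans _ (convex_le_max _ _ (sqr_ge0 (nrm x1)) (sqr_ge0 (nrm x2)) hn)).
  apply: lerD.
    exact: (le_numrad ipP (is_bounded_op_homogeneous bA)
                          (is_bounded_op_bounded bA) x1).
  exact: (le_numrad ipP (is_bounded_op_homogeneous bD)
                        (is_bounded_op_bounded bD) x2).
have N0 : 0 <= gram_norm by rewrite le_max opnorm_ge0.
have W0 : 0 <= cross_rad by rewrite le_max numrad_ge0.
apply: le_trans (le_normcD _ _) _; apply: le_of_sqr_le.
- by rewrite addr_ge0 ?normc_ge0.
- exact: sqrtr_ge0.
- rewrite sqr_sqrtr; last by rewrite divr_ge0 // addr_ge0 ?mulr_ge0.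
  by have := offdiag_le hn; lra.
Qed.

End OperatorMatrix.

Theorem mainTheorem12 (R : realType) (H : lmodType R[i]) (ip : H -> H -> R[i])
  (A B C D Bs Cs : H -> H) (alpha : R) :
  is_hilbert ip ->
  is_bounded_op ip A -> is_bounded_op ip B ->
  is_bounded_op ip C -> is_bounded_op ip D ->
  is_adjoint ip B Bs ->
  is_adjoint ip C Cs ->
  0 <= alpha <= 1 ->
  numrad (ip_sum ip) (opmatrix A B C D) ^+ 4 <=
    8 * Num.max (numrad ip A ^+ 4) (numrad ip D ^+ 4)
  + (1 + alpha) * Num.max (opnorm ip (opadd (absq4 B Bs) (absq4 Cs C)))
                          (opnorm ip (opadd (absq4 Bs B) (absq4 C Cs)))
  + 2 * (1 - alpha) * Num.max (numrad ip (B \o C) ^+ 2) (numrad ip (C \o B) ^+ 2)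
  + 2 * Num.max (opnorm ip (opadd (absq B Bs) (absq Cs C)))
                (opnorm ip (opadd (absq Bs B) (absq C Cs)))
      * Num.max (numrad ip (B \o C)) (numrad ip (C \o B)).
Proof.
move=> [ipP _] bA bB bC bD adjB adjC alpha01.
have s0 : 0 <= diag_rad ip A D by rewrite le_max numrad_ge0.
have N0 : 0 <= gram_norm ip B C Bs Cs by rewrite le_max opnorm_ge0.
have W0 : 0 <= cross_rad ip B C by rewrite le_max numrad_ge0.
have rho0 : 0 <= (gram_norm ip B C Bs Cs + 2 * cross_rad ip B C) / 4.
  by rewrite divr_ge0 // addr_ge0 ?mulr_ge0.
apply: (quartic_estimate (s := diag_rad ip A D)
          (rho := Num.sqrt ((gram_norm ip B C Bs Cs + 2 * cross_rad ip B C) / 4))).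
- exact: numrad_ge0.
- exact: numrad_opmatrix_le.
- exact: s0.
- exact: sqrtr_ge0.
- by rewrite sqr_sqrtr // mulrC divfK // pnatr_eq0.
- exact: cross_rad_le.
- exact: W0.
- exact: gram_norm_sqr_le.
- exact: max_exprn_le.
- exact: max_exprn_le.
- exact: alpha01.
Qed.
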